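(* $\displaystyle\lim_{n\to\infty}V_n(E)^{1/n}=\lim_{n\to\infty}M_n(E)=0.$
   Context: $U$ is the open unit disc and $E\subset U$ is a set with infinitely many points whose set $E_0$ of nontangential limit points has Lebesgue measure zero on $\partial U$ (a point $\zeta\in\partial U$ is a nontangential limit point of $E$ if some sequence $(w_n)$ in $E$ satisfies $w_n\to\zeta$ and $|w_n-\zeta|=O(1-|w_n|)$). The function $q$: if $\overline E\cap\partial U=\emptyset$, $q\equiv1$; otherwise $q$ is holomorphic on $U$ with $0<|q|<1$ on $U$ and $\lim_{z\in E,|z|\to1}q(z)=0$, normalized so that $\sup_U|q|=1$. For $Z_n=(z_1,\dots,z_n)$: $B(Z_n,z)=\prod_{j=1}^n\frac{z-z_j}{1-\overline{z_j}z}$, $B_q(Z_n,z)=B(Z_n,z)q(z)$ (an empty product equals $1$), $Z_{j-1}=(z_1,\dots,z_{j-1})$. Define $V(Z_n)=\prod_{j=1}^n|B_q(Z_{j-1},z_j)|$, $M(Z_n)=\sup_{z\in E}|B_q(Z_n,z)|$, $V_n(E)=\sup_{Z_n\in E^n}V(Z_n)$ and $M_n(E)=\inf\{M(Z_n): Z_n\in E^n,\ V(Z_n)=V_n(E)\}$. *)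

From HB Require Import structures.
From mathcomp Require Import all_boot all_order all_algebra.
From mathcomp Require Import all_classical all_reals all_analysis.
From mathcomp.real_closed Require Import complex.

Set Implicit Arguments.
Unset Strict Implicit.
Unset Printing Implicit Defensive.

Import Order.TTheory GRing.Theory Num.Theory.
Local Open Scope classical_set_scope.
Local Open Scope ring_scope.

Section Defs.
Variable R : realType.
Local Notation C := R[i].

Definition cabs (z : C) : R := ComplexField.Normc.normc z.

Definition cconj (z : C) : C := conjc z.

Definition Udisc : set C := [set z | cabs z < 1].
Definition Ucircle : set C := [set z | cabs z = 1].

Definition expi (t : R) : C := Complex (cos t) (sin t).

(** A set of the unit circle has (arc-length) Lebesgue measure zero:
    its pull-back by t |-> e^{it}, t in [0, 2pi), is Lebesgue-negligible. *)
Definition circle_null (A : set C) : Prop :=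
  (@lebesgue_measure R).-negligible
    [set t : R | 0 <= t < pi *+ 2 /\ A (expi t)].

Definition nt_limit_point (E : set C) (zeta : C) : Prop :=
  Ucircle zeta /\
  exists w : nat -> C,
    (forall n, E (w n)) /\
    (forall eps : R, 0 < eps -> exists N : nat, forall n, (N <= n)%N ->
        cabs (w n - zeta) < eps) /\
    (exists K : R, exists N : nat, forall n, (N <= n)%N ->
        cabs (w n - zeta) <= K * (1 - cabs (w n))).

Definition nt_limit_points (E : set C) : set C := [set zeta | nt_limit_point E zeta].

Definition closure_meets_circle (E : set C) : Prop :=
  exists zeta : C, Ucircle zeta /\
    forall eps : R, 0 < eps -> exists z, E z /\ cabs (z - zeta) < eps.

Definition cdifferentiable_at (f : C -> C) (z0 : C) : Prop :=
  exists L : C, forall eps : R, 0 < eps -> exists delta : R, 0 < delta /\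
    forall w : C, 0 < cabs (w - z0) < delta ->
      cabs ((f w - f z0) / (w - z0) - L) < eps.

Definition holomorphic_on_U (f : C -> C) : Prop :=
  forall z, Udisc z -> cdifferentiable_at f z.

Definition admissible_q (E : set C) (q : C -> C) : Prop :=
  if `[< closure_meets_circle E >] then
    [/\ holomorphic_on_U q,
        (forall z, Udisc z -> 0 < cabs (q z) < 1),
        (forall eps : R, 0 < eps -> exists delta : R, 0 < delta /\
           forall z, E z -> 1 - delta < cabs z -> cabs (q z) < eps) &
        sup [set cabs (q z) | z in Udisc] = 1]
  else forall z, Udisc z -> q z = 1.

Definition Bl (Z : seq C) (z : C) : C :=
  \prod_(a <- Z) ((z - a) / (1 - cconj a * z)).

Definition Bq (q : C -> C) (Z : seq C) (z : C) : C := Bl Z z * q z.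

(** V(Z_n) = prod_{j=1}^n |B_q(Z_{j-1}, z_j)|  (Z_{j-1} = first j-1 points) *)
Definition Vt (q : C -> C) (Z : seq C) : R :=
  \prod_(j < size Z) cabs (Bq q (take j Z) (nth 0 Z j)).

Definition Mt (q : C -> C) (E : set C) (Z : seq C) : R :=
  sup [set cabs (Bq q Z z) | z in E].

Definition tuples_in (E : set C) (n : nat) : set (seq C) :=
  [set Z | size Z = n /\ forall z, z \in Z -> E z].

Definition Vn (q : C -> C) (E : set C) (n : nat) : R :=
  sup [set Vt q Z | Z in tuples_in E n].

Definition Mn (q : C -> C) (E : set C) (n : nat) : R :=
  inf [set Mt q E Z | Z in [set Z | tuples_in E n Z /\ Vt q Z = Vn q E n]].

End Defs.

From HB Require Import structures.
From mathcomp Require Import all_boot all_order all_algebra.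
From mathcomp Require Import all_classical all_reals all_analysis.
From mathcomp.real_closed Require Import complex.
From mathcomp Require Import ring lra zify.
Import Order.TTheory GRing.Theory Num.Theory.
Local Open Scope classical_set_scope.
Local Open Scope ring_scope.

Set Implicit Arguments.
Unset Strict Implicit.

(** Let [pdist a z = |(z - a) / (1 - conj(a) z)|] be the pseudo-hyperbolic distance, so that
    [|B_q(Z, z)| = prod_(a in Z) pdist a z * |q z|]; since [pdist] is symmetric, [V(Z)] is the
    symmetric function [prod_(i < j) pdist z_i z_j * prod_j |q z_j|] of the tuple [Z].
    Given [eps], pick [d] such that [|q| <= eps] on the points of [E] with [|z| > 1 - d]; on the
    disc [|z| <= 1 - d] one has [pdist <= rho := 1 - d^2/8 < 1].  A tuple with [o] outer and [k]
    inner points then has [V(Z) <= eps^o rho^(k(k-1)/2)], which is [<= eps^(n/2)] for [n] large,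
    so [V_n^(1/n) -> 0].  If [Z] maximizes [V] and [z] is in [E], exchanging a point [a] of [Z] for
    [z] does not increase [V], whence [|B_q(Z, z)| <= |B_q(Z \ a, a)|]: this is [<= eps] for an
    outer [a], and [<= rho^(n-1)] when all points of [Z] are inner, so [M_n -> 0].  When the
    closure of [E] misses the circle ([q = 1]), compactness keeps [E] inside some [|z| <= 1 - d]. *)

Section PseudoHyperbolic.
Variable R : realType.
Local Notation C := R[i].
Implicit Types a z : C.

Lemma cabs_ge0 z : 0 <= cabs z.
Proof. by case: z => x y; apply: sqrtr_ge0. Qed.

Lemma cabs_sqr z : cabs z ^+ 2 = complex.Re z ^+ 2 + complex.Im z ^+ 2.
Proof. by case: z => x y; rewrite /cabs /= sqr_sqrtr // addr_ge0 // sqr_ge0. Qed.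

Lemma cabsM a z : cabs (a * z) = cabs a * cabs z.
Proof. exact: ComplexField.Normc.normcM. Qed.

Lemma cabs_conj z : cabs (cconj z) = cabs z.
Proof. by case: z => x y; rewrite /cabs /= sqrrN. Qed.

Lemma cabs1 : cabs (1 : C) = 1.
Proof. exact: ComplexField.Normc.normc1. Qed.

Lemma cabsV z : cabs z^-1 = (cabs z)^-1.
Proof. exact: ComplexField.Normc.normcV. Qed.

Lemma cabsN z : cabs (- z) = cabs z.
Proof. by case: z => x y; rewrite /cabs /= !sqrrN. Qed.

Lemma cabs_le_add a z : cabs (a + z) <= cabs a + cabs z.
Proof. exact: le_normcD. Qed.

Lemma cabs_1_conjM_sqr a z :
  cabs (1 - cconj a * z) ^+ 2 = cabs (z - a) ^+ 2 + (1 - cabs a ^+ 2) * (1 - cabs z ^+ 2).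
Proof. by case: a z => [a1 a2] [z1 z2]; rewrite !cabs_sqr /=; ring. Qed.

Lemma cabs_1_conjM_le2 a z : cabs a <= 1 -> cabs z <= 1 -> cabs (1 - cconj a * z) <= 2.
Proof.
move=> a1 z1; apply: le_trans (cabs_le_add _ _) _.
rewrite cabsN cabsM cabs_conj cabs1.
by have := cabs_ge0 a; have := cabs_ge0 z; nra.
Qed.

Lemma cabs_subr_le_1_conjM a z : cabs a <= 1 -> cabs z <= 1 ->
  cabs (z - a) <= cabs (1 - cconj a * z).
Proof.
move=> a1 z1; rewrite -(ler_pXn2r (n := 2)) ?nnegrE ?cabs_ge0 // cabs_1_conjM_sqr lerDl.
by apply: mulr_ge0; rewrite subr_ge0 exprn_ile1 // cabs_ge0.
Qed.

Definition pdist a z : R := cabs ((z - a) / (1 - cconj a * z)).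

Lemma pdistE a z : pdist a z = cabs (z - a) / cabs (1 - cconj a * z).
Proof. by rewrite /pdist cabsM cabsV. Qed.

Lemma pdist_ge0 a z : 0 <= pdist a z.
Proof. exact: cabs_ge0. Qed.

Lemma pdistC a z : pdist a z = pdist z a.
Proof.
rewrite !pdistE -cabsN opprB; congr (_ / _).
by rewrite -cabs_conj /cconj rmorphB rmorph1 rmorphM /= conjcK mulrC.
Qed.

Lemma pdist_le1 a z : cabs a <= 1 -> cabs z <= 1 -> pdist a z <= 1.
Proof.
move=> a1 z1; rewrite pdistE; have := cabs_subr_le_1_conjM a1 z1.
have [->|D0] := eqVneq (cabs (1 - cconj a * z)) 0; first by rewrite invr0 mulr0.
by move=> le_ND; rewrite ler_pdivrMr ?mul1r // lt_neqAle eq_sym D0 cabs_ge0.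
Qed.

Lemma pdist_gt0 a z : cabs a <= 1 -> cabs z <= 1 -> a != z -> 0 < pdist a z.
Proof.
move=> a1 z1 az; have N0 : 0 < cabs (z - a).
  rewrite lt_neqAle cabs_ge0 andbT eq_sym; apply: contra az => /eqP/ComplexField.Normc.eq0_normc.
  by move/eqP; rewrite subr_eq0 eq_sym.
by rewrite pdistE divr_gt0 // (lt_le_trans N0) // cabs_subr_le_1_conjM.
Qed.

(* With [cabs (1 - cconj a * z) <= 2], the identity above gives
   [1 - pdist a z ^+ 2 >= (1 - |a|^2) (1 - |z|^2) / 4 >= d^2 / 4]. *)
Lemma pdist_le_inner (d : R) a z : 0 < d <= 1 -> cabs a <= 1 - d -> cabs z <= 1 - d ->
  pdist a z <= 1 - d ^+ 2 / 8.
Proof.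
move=> /andP[d0 d1] ad zd.
have a0 := cabs_ge0 a; have z0 := cabs_ge0 z.
have P_ge : d ^+ 2 <= (1 - cabs a ^+ 2) * (1 - cabs z ^+ 2).
  by rewrite expr2 ler_pM //; nra.
have := cabs_1_conjM_sqr a z; rewrite pdistE.
set N := cabs (z - a); set D := cabs (1 - cconj a * z) => ND.
have D_le2 : D <= 2 by apply: cabs_1_conjM_le2; lra.
have N0 : 0 <= N := cabs_ge0 _; have D0 : 0 <= D := cabs_ge0 _.
have D_gt0 : 0 < D by rewrite lt_neqAle D0 andbT; apply/eqP => D0'; nra.
have rho0 : 0 <= 1 - d ^+ 2 / 8 by nra.
rewrite ler_pdivrMr // -(ler_pXn2r (n := 2)) ?nnegrE ?mulr_ge0 //.
have D2_le4 : D ^+ 2 <= 4 by nra.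
have : (1 - d ^+ 2 / 4) * D ^+ 2 <= (1 - d ^+ 2 / 8) ^+ 2 * D ^+ 2.
  have -> : (1 - d ^+ 2 / 8) ^+ 2 = 1 - d ^+ 2 / 4 + (d ^+ 2 / 8) ^+ 2 by field.
  by rewrite ler_wpM2r ?sqr_ge0 // lerDl sqr_ge0.
rewrite exprMn; nra.
Qed.
End PseudoHyperbolic.

Section BlaschkeProducts.
Variables (R : realType) (q : R[i] -> R[i]).
Local Notation C := R[i].
Implicit Types (a z : C) (X Z W : seq C).

Lemma cabs_Bq Z z : cabs (Bq q Z z) = \prod_(a <- Z) pdist a z * cabs (q z).
Proof. by rewrite /Bq cabsM /Bl (big_morph _ (@cabsM R) (@cabs1 R)). Qed.

Lemma cabs_Bq_nil z : cabs (Bq q [::] z) = cabs (q z).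
Proof. by rewrite cabs_Bq big_nil mul1r. Qed.

Lemma cabs_Bq_cons a Z z : cabs (Bq q (a :: Z) z) = pdist a z * cabs (Bq q Z z).
Proof. by rewrite !cabs_Bq big_cons mulrA. Qed.

Lemma cabs_Bq_cat_cons X a W z :
  cabs (Bq q (X ++ a :: W) z) = pdist a z * cabs (Bq q (X ++ W) z).
Proof. by rewrite !cabs_Bq !big_cat big_cons /= mulrCA !mulrA. Qed.

Lemma Vt_nil : Vt q [::] = 1.
Proof. by rewrite /Vt big_ord0. Qed.

Lemma Vt_ge0 Z : 0 <= Vt q Z.
Proof. by apply: prodr_ge0 => j _; apply: cabs_ge0. Qed.

(* The new first point [a] enters each later factor as [pdist a z_j]; by symmetry of [pdist] these
   factors make up [cabs (Bq q Z a)]. *)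
Lemma Vt_cons a Z : Vt q (a :: Z) = Vt q Z * cabs (Bq q Z a).
Proof.
rewrite /Vt big_ord_recl /= -/(size Z) cabs_Bq_nil.
under eq_bigr => j _ do rewrite add0n cabs_Bq_cons.
rewrite big_split /= cabs_Bq (big_nth 0) big_mkord.
under [in LHS]eq_bigr => j _ do rewrite pdistC.
ring.
Qed.

Lemma Vt_cat_cons X a W : Vt q (X ++ a :: W) = Vt q (X ++ W) * cabs (Bq q (X ++ W) a).
Proof.
elim: X => [|x X IH] /=; first exact: Vt_cons.
rewrite !Vt_cons IH cabs_Bq_cat_cons !cabs_Bq_cons pdistC; ring.
Qed.
End BlaschkeProducts.

Lemma exists_expr_le (R : realType) (r x : R) : 0 <= r < 1 -> 0 < x -> exists m, r ^+ m <= x.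
Proof.
move=> /andP[r0 r1] x0; have r_lt1 : `|r| < 1 by rewrite ger0_norm.
have /cvgrPdist_le /(_ x x0) [m _ /(_ m (leqnn m))] := cvg_expr r_lt1.
by rewrite sub0r normrN ger0_norm ?exprn_ge0 //; exists m.
Qed.

(* With [n = o + k]: if [2 k > n] then ['C(k, 2) >= m k] where [r ^+ m <= e ^+ 2], and otherwise [2 o >= n]. *)
Lemma expr_binomial_le (R : realType) (e r : R) : 0 < e <= 1 -> 0 <= r < 1 ->
  exists N, forall o k, (N <= o + k)%N -> (e ^+ 2) ^+ o * r ^+ 'C(k, 2) <= e ^+ (o + k).
Proof.
move=> /andP[e0 e1] r01; have /andP[r0 r1] := r01.
have [m rm_le] := exists_expr_le r01 (exprn_gt0 2 e0).
exists (4 * m + 2)%N => o k Nn; rewrite -exprM.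
have e_ge0 := ltW e0; have r_le1 := ltW r1.
have [k_le|k_gt] := leqP (2 * k) (o + k).
  rewrite -[leRHS]mulr1 ler_pM ?exprn_ge0 ?exprn_ile1 //.
  by rewrite ler_wiXn2l //; lia.
rewrite -[leRHS]mul1r ler_pM ?exprn_ge0 ?exprn_ile1 //.
have mk_le : (m * k <= 'C(k, 2))%N by rewrite bin2; nia.
apply: le_trans (ler_wiXn2l r0 r_le1 mk_le) _.
rewrite exprM (le_trans (lerXn2r k _ _ rm_le)) ?nnegrE ?exprn_ge0 // -exprM.
by rewrite ler_wiXn2l //; lia.
Qed.

Lemma points_in_cons (T : eqType) (E : set T) (a : T) (Z : seq T) :
  (forall b, b \in a :: Z -> E b) -> E a /\ (forall b, b \in Z -> E b).
Proof. by move=> ZE; split=> [|b bZ]; apply: ZE; rewrite inE ?eqxx ?bZ ?orbT. Qed.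

Lemma points_in_cat_cons (T : eqType) (E : set T) (X : seq T) (a : T) (W : seq T) :
  (forall b, b \in X ++ a :: W -> E b) -> E a /\ (forall b, b \in X ++ W -> E b).
Proof.
move=> ZE; split=> [|b bY]; apply: ZE; rewrite mem_cat inE ?eqxx ?orbT //.
by rewrite orbCA -mem_cat bY orbT.
Qed.

Section FeketePoints.
Variables (R : realType) (E : set R[i]) (q : R[i] -> R[i]).
Local Notation C := R[i].
Implicit Types (a z : C) (X Z W : seq C).
Hypothesis E_disc : E `<=` Udisc (R := R).
Hypothesis q_bound : forall z, E z -> 0 < cabs (q z) <= 1.

Let cabs_le1 z : E z -> cabs z <= 1.
Proof. by move/E_disc/ltW. Qed.

Lemma prod_pdist_le1 Z z : (forall a, a \in Z -> E a) -> E z ->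
  \prod_(a <- Z) pdist a z <= 1.
Proof.
move=> ZE zE; rewrite big_seq; apply: prodr_ile1 => a aZ.
by rewrite pdist_ge0; apply: pdist_le1; apply: cabs_le1 => //; apply: ZE.
Qed.

Lemma cabs_Bq_le_q Z z : (forall a, a \in Z -> E a) -> E z -> cabs (Bq q Z z) <= cabs (q z).
Proof.
by move=> ZE zE; rewrite cabs_Bq ler_piMl ?cabs_ge0 ?prod_pdist_le1.
Qed.

Lemma cabs_Bq_le_prod Z z : E z -> cabs (Bq q Z z) <= \prod_(a <- Z) pdist a z.
Proof.
move=> zE; rewrite cabs_Bq ler_piMr ?prodr_ge0 //; last by case/andP: (q_bound zE).
by move=> a _; apply: pdist_ge0.
Qed.

Lemma Vt_le1 Z : (forall a, a \in Z -> E a) -> Vt q Z <= 1.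
Proof.
elim: Z => [|a Z IH] ZE; first by rewrite Vt_nil.
have [aE {}ZE] := points_in_cons ZE.
rewrite Vt_cons mulr_ile1 ?Vt_ge0 ?cabs_ge0 ?IH //.
by apply: le_trans (cabs_Bq_le_q ZE aE) _; case/andP: (q_bound aE).
Qed.

Lemma Vt_gt0 Z : (forall a, a \in Z -> E a) -> uniq Z -> 0 < Vt q Z.
Proof.
elim: Z => [|a Z IH] ZE; first by rewrite Vt_nil.
have [aE {}ZE] := points_in_cons ZE; case/andP => aZ Zu.
rewrite Vt_cons mulr_gt0 ?IH // cabs_Bq mulr_gt0 //; last by case/andP: (q_bound aE).
rewrite big_seq; apply: prodr_gt0 => b bZ.
have bE := ZE b bZ; rewrite pdist_gt0 ?cabs_le1 //; by apply: contraNneq aZ => <-.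
Qed.

Lemma Vn_ub n : has_ubound [set Vt q Z | Z in tuples_in E n].
Proof. by exists 1 => _ [Z [_ ZE] <-]; apply: Vt_le1. Qed.

Lemma Vt_le_Vn n Z : tuples_in E n Z -> Vt q Z <= Vn q E n.
Proof. by move=> ZEn; apply: (ub_le_sup (Vn_ub n)); exists Z. Qed.

(* Exchanging the point [a] of a maximizing tuple for [z] cannot increase [Vt]. *)
Lemma cabs_Bq_maximizer_exchange X a W z :
  let Z := X ++ a :: W in
  (forall b, b \in Z -> E b) -> 0 < Vt q Z ->
  (forall Z', tuples_in E (size Z) Z' -> Vt q Z' <= Vt q Z) -> E z ->
  cabs (Bq q Z z) <= cabs (Bq q (X ++ W) a).
Proof.
move=> Z ZE Vt_gt0 Z_max zE; have [aE YE] := points_in_cat_cons ZE.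
have Vt_Y_gt0 : 0 < Vt q (X ++ W).
  rewrite lt_neqAle Vt_ge0 andbT; move: Vt_gt0; rewrite /Z Vt_cat_cons.
  by apply: contraTneq => <-; rewrite mul0r ltxx.
have : Vt q (X ++ z :: W) <= Vt q Z.
  apply: Z_max; split; first by rewrite !size_cat.
  by move=> b; rewrite mem_cat inE orbCA -mem_cat => /predU1P[-> // | /YE].
rewrite /Z !Vt_cat_cons ler_pM2l // cabs_Bq_cat_cons; apply: le_trans.
by rewrite ler_piMl ?cabs_ge0 // pdist_le1 ?cabs_le1.
Qed.

Section NearCircle.
Variables (d e : R).
Hypothesis d01 : 0 < d <= 1.
Hypothesis q_small : forall z, E z -> 1 - d < cabs z -> cabs (q z) <= e.

Let inner : pred C := [pred z | cabs z <= 1 - d].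
Let rho := 1 - d ^+ 2 / 8.

Lemma prod_pdist_le_inner Z z : (forall a, a \in Z -> E a) -> inner z ->
  \prod_(a <- Z) pdist a z <= rho ^+ count inner Z.
Proof.
have z_le1 z' : inner z' -> cabs z' <= 1.
  by move=> zi; apply: le_trans zi _; rewrite gerBl; case/andP: d01 => /ltW.
elim: Z => [|a Z IH] ZE zi; first by rewrite big_nil.
have [aE {}ZE] := points_in_cons ZE.
rewrite big_cons /= exprD; apply: ler_pM; rewrite ?pdist_ge0 ?prodr_ge0 ?IH //.
  by move=> b _; apply: pdist_ge0.
case ai: (inner a); first by rewrite expr1 pdist_le_inner.
by rewrite expr0; apply: pdist_le1; [exact: cabs_le1 | exact: z_le1].
Qed.

Lemma Vt_le_count Z : (forall a, a \in Z -> E a) ->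
  Vt q Z <= e ^+ count (predC inner) Z * rho ^+ 'C(count inner Z, 2).
Proof.
elim: Z => [|a Z IH] ZE; first by rewrite Vt_nil mulr1.
have [aE {}ZE] := points_in_cons ZE.
rewrite Vt_cons /=; case ai: (inner a) => /=.
- rewrite add0n add1n binS bin1 exprD mulrA.
  apply: ler_pM (Vt_ge0 _ _) (cabs_ge0 _) (IH ZE) _.
  exact: le_trans (cabs_Bq_le_prod Z aE) (prod_pdist_le_inner ZE ai).
- rewrite add1n add0n exprSr mulrAC.
  apply: ler_pM (Vt_ge0 _ _) (cabs_ge0 _) (IH ZE) _.
  by apply: le_trans (cabs_Bq_le_q ZE aE) _; apply: q_small; rewrite // ltNge; apply: negbT.
Qed.

Lemma cabs_Bq_maximizer_le n Z z : (forall a, a \in Z -> E a) -> size Z = n.+1 ->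
  0 < Vt q Z -> (forall Z', tuples_in E n.+1 Z' -> Vt q Z' <= Vt q Z) -> E z ->
  cabs (Bq q Z z) <= Num.max e (rho ^+ n).
Proof.
move=> ZE Zn Vt_gt0 + zE; rewrite -Zn => Z_max.
have [/hasP[a aZ ao] | all_inner] := boolP (has (predC inner) Z).
  move: ZE Vt_gt0 Z_max; case/splitPr: aZ => X W ZE Vt_gt0 Z_max.
  have [aE YE] := points_in_cat_cons ZE.
  apply: le_trans (cabs_Bq_maximizer_exchange ZE Vt_gt0 Z_max zE) _.
  rewrite le_max (le_trans (cabs_Bq_le_q YE aE)) //.
  by apply: q_small; rewrite // ltNge.
case: Z Zn ZE Vt_gt0 Z_max all_inner => // a Y [Yn] ZE Vt_gt0 Z_max.
rewrite has_predC negbK /= => /andP[ai /allP Yi].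
have [aE YE] := points_in_cons ZE.
apply: le_trans (cabs_Bq_maximizer_exchange (X := [::]) ZE Vt_gt0 Z_max zE) _ => /=.
have <- : count inner Y = n by rewrite -Yn; apply/eqP; rewrite -all_count; apply/allP.
by rewrite le_max orbC (le_trans (cabs_Bq_le_prod Y aE) (prod_pdist_le_inner YE ai)).
Qed.
End NearCircle.

Hypothesis E_infinite : infinite_set E.

Let E_neq0 : E !=set0.
Proof. by apply/set0P/negP => /eqP E0; apply: E_infinite; rewrite E0. Qed.

Lemma uniq_tuple_exists n : exists2 Z, tuples_in E n Z & uniq Z.
Proof.
elim: n => [|n [Z [Zn ZE] Zu]]; first by exists [::].
have [z zE zZ] : exists2 z, E z & z \notin Z.
  apply: contrapT => noz; apply: E_infinite; apply: sub_finite_set (finite_seq Z) => z zE /=.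
  by apply: contrapT => zZ; apply: noz; exists z => //; apply/negP.
exists (z :: Z); last by rewrite /= zZ.
by split=> [|b]; [rewrite /= Zn | rewrite inE => /predU1P[->|/ZE]].
Qed.

Lemma Vn_gt0 n : 0 < Vn q E n.
Proof.
have [Z ZEn Zu] := uniq_tuple_exists n.
by apply: lt_le_trans (Vt_le_Vn ZEn); apply: Vt_gt0 => //; case: ZEn.
Qed.

Lemma Vn_le n b : (forall Z, tuples_in E n Z -> Vt q Z <= b) -> Vn q E n <= b.
Proof.
move=> Vt_le; apply: ge_sup => [|_ [Z ZEn <-]]; last exact: Vt_le.
by have [Z ZEn _] := uniq_tuple_exists n; exists (Vt q Z), Z.
Qed.

Lemma Mt_le Z b : (forall z, E z -> cabs (Bq q Z z) <= b) -> Mt q E Z <= b.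
Proof.
move=> Bq_le; apply: ge_sup => [|_ [z zE <-]]; last exact: Bq_le.
by have [z zE] := E_neq0; exists (cabs (Bq q Z z)), z.
Qed.

Lemma Mt_ge0 Z : (forall a, a \in Z -> E a) -> 0 <= Mt q E Z.
Proof.
move=> ZE; have [z zE] := E_neq0; apply: le_trans (cabs_ge0 (Bq q Z z)) _.
apply: ub_le_sup; last by exists z.
by exists 1 => _ [w wE <-]; apply: le_trans (cabs_Bq_le_q ZE wE) _; case/andP: (q_bound wE).
Qed.

(* If no tuple attains [Vn q E n], then [Mn q E n] is the infimum of the empty set, i.e. [0]. *)
Lemma normr_Mn_le n b : 0 <= b ->
  (forall Z, tuples_in E n Z -> Vt q Z = Vn q E n -> Mt q E Z <= b) -> `|Mn q E n| <= b.
Proof.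
rewrite /Mn; set T := [set Mt q E Z | Z in _] => b0 Mt_le_b.
have [[_ [Z [ZEn VZ] _]] | T0] := pselect (T !=set0); last first.
  rewrite (_ : T = set0) ?inf0 ?normr0 //.
  by apply/seteqP; split=> // x Tx; apply: T0; exists x.
have T_lb : lbound T 0 by move=> _ [Z' [[_ Z'E] _] <-]; apply: Mt_ge0.
rewrite ger0_norm; last by apply: lb_le_inf => //; exists (Mt q E Z), Z.
apply: le_trans (Mt_le_b Z ZEn VZ); apply: ge_inf; [by exists 0 | by exists Z].
Qed.

Hypothesis q_small_near_circle : forall eps, 0 < eps ->
  exists2 d, 0 < d <= 1 & forall z, E z -> 1 - d < cabs z -> cabs (q z) <= eps.

Let rho_bounds (d : R) : 0 < d <= 1 -> 0 <= 1 - d ^+ 2 / 8 < 1.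
Proof. by case/andP=> d0 d1; apply/andP; split; nra. Qed.

Lemma Vn_root_cvg0 : Vn q E n `^ n%:R^-1 @[n --> \oo] --> 0.
Proof.
apply/cvgrPdist_le => eps eps0; set e := Num.min eps 1.
have e0 : 0 < e by rewrite lt_min eps0 ltr01.
have e01 : 0 < e <= 1 by rewrite e0 ge_min lexx orbT.
have [d d01 q_small] := q_small_near_circle (exprn_gt0 2 e0).
have [N VN] := expr_binomial_le e01 (rho_bounds d01).
exists N.+1 => // n /= Nn; rewrite sub0r normrN ger0_norm ?powR_ge0 //.
apply: (@le_trans _ _ e); last by rewrite ge_min lexx.
have Vn_le_en : Vn q E n <= e ^+ n.
  apply: Vn_le => Z [Zn ZE]; apply: le_trans (Vt_le_count d01 q_small ZE) _.
  rewrite -Zn -(count_predC [pred z | cabs z <= 1 - d]) addnC.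
  by apply: VN; rewrite addnC count_predC Zn ltnW.
have e_ge0 := ltW e0; have Vn_ge0 := ltW (Vn_gt0 n).
apply: le_trans (ge0_ler_powR _ _ _ Vn_le_en) _; rewrite ?nnegrE ?invr_ge0 ?exprn_ge0 //.
by rewrite -powR_mulrn // -powRrM mulfV ?powRr1 // pnatr_eq0 -lt0n (leq_ltn_trans _ Nn).
Qed.

Lemma Mn_cvg0 : Mn q E n @[n --> \oo] --> 0.
Proof.
apply/cvgrPdist_le => eps eps0.
have [d d01 q_small] := q_small_near_circle eps0.
have /andP[rho0 rho1] := rho_bounds d01.
have [m rho_m] := exists_expr_le (rho_bounds d01) eps0.
exists m.+1 => // -[//|n] /= mn; rewrite sub0r normrN.
apply: normr_Mn_le (ltW eps0) _ => Z [Zn ZE] VZ; apply: Mt_le => z zE.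
apply: le_trans (cabs_Bq_maximizer_le d01 q_small ZE Zn _ _ zE) _.
- by rewrite VZ Vn_gt0.
- by move=> Z' Z'E; rewrite VZ; apply: Vt_le_Vn.
by rewrite ge_max lexx /= (le_trans _ rho_m) // ler_wiXn2l // ltW.
Qed.
End FeketePoints.

Section BoundedAway.
Variable R : realType.
Local Notation C := R[i].
Implicit Types (a z : C).

Lemma cabs_le_addr_subr a z : cabs a <= cabs z + cabs (a - z).
Proof. by rewrite -{1}(subrK z a) addrC cabs_le_add. Qed.

Lemma cabs_le_ReIm z (x y : R) :
  cabs (z - Complex x y) <= `|complex.Re z - x| + `|complex.Im z - y|.
Proof.
case: z => u v; rewrite (_ : _ - _ = Complex (u - x) 0 + Complex 0 (v - y)).
  by apply: le_trans (cabs_le_add _ _) _; rewrite /cabs /= !expr0n /= addr0 add0r !sqrtr_sqr.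
by apply/eqP; rewrite eq_complex /= addr0 add0r !eqxx.
Qed.

Lemma bounded_cabs_Re (w : nat -> C) : (forall n, cabs (w n) <= 1) ->
  bounded_fun (fun n => complex.Re (w n)).
Proof.
move=> w1; exists 1; split=> // M M1 n _ /=; apply: le_trans (ltW M1).
apply: le_trans (w1 n); case: (w n) => x y; rewrite /cabs /= -sqrtr_sqr.
by apply: ler_wsqrtr; rewrite lerDl sqr_ge0.
Qed.

Lemma bounded_cabs_Im (w : nat -> C) : (forall n, cabs (w n) <= 1) ->
  bounded_fun (fun n => complex.Im (w n)).
Proof.
move=> w1; exists 1; split=> // M M1 n _ /=; apply: le_trans (ltW M1).
apply: le_trans (w1 n); case: (w n) => x y; rewrite /cabs /= -sqrtr_sqr.
by apply: ler_wsqrtr; rewrite lerDr sqr_ge0.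
Qed.

Lemma increasing_seq_ge (f : nat -> nat) : increasing_seq f -> forall n, (n <= f n)%N.
Proof. by move=> /increasing_seqP f_lt; elim=> // n IH; apply: leq_ltn_trans IH (f_lt n). Qed.

(* Bolzano-Weierstrass on the real parts, then on the imaginary parts of the extracted subsequence. *)
Lemma cluster_value_exists (w : nat -> C) : (forall n, cabs (w n) <= 1) ->
  exists zeta, forall eps, 0 < eps -> forall K, exists2 n, (K <= n)%N & cabs (w n - zeta) < eps.
Proof.
move=> w1; have [f f_incr fx] := bolzano_weierstrass (bounded_cabs_Re w1).
have [g g_incr gy] := bolzano_weierstrass (bounded_cabs_Im (fun n => w1 (f n))).
set x := lim _ in fx; set y := lim _ in gy.
exists (Complex x y) => eps eps0 K; have eps20 : 0 < eps / 2 by rewrite divr_gt0.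
move/cvgrPdist_lt: fx => /(_ _ eps20) [N1 _ N1x].
move/cvgrPdist_lt: gy => /(_ _ eps20) [N2 _ N2y].
set n := maxn K (maxn N1 N2); have gn := increasing_seq_ge g_incr n.
have fgn := increasing_seq_ge f_incr (g n).
exists (f (g n)); first by lia.
apply: le_lt_trans (cabs_le_ReIm _ x y) _; rewrite [eps]splitr ltrD //.
  by rewrite distrC (N1x (g n)) //=; lia.
by rewrite distrC (N2y n) //=; lia.
Qed.

Lemma disc_bounded_away (E : set C) : E `<=` Udisc (R := R) -> ~ closure_meets_circle E ->
  exists2 d, 0 < d <= 1 & forall z, E z -> cabs z <= 1 - d.
Proof.
move=> E_disc E_far; apply: contrapT => E_near; apply: E_far.
have near n : exists w, E w /\ 1 - n.+1%:R^-1 < cabs w.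
  apply: contrapT => no_w; apply: E_near; exists n.+1%:R^-1.
    by rewrite invr_gt0 ltr0Sn invf_le1 ?ler1n ?ltr0Sn.
  by move=> z zE; rewrite leNgt; apply/negP => z_gt; apply: no_w; exists z.
have [w /all_and2[wE w_gt]] := choice near.
have w_lt1 n : cabs (w n) < 1 := E_disc _ (wE n).
have [zeta zeta_cl] := cluster_value_exists (fun n => ltW (w_lt1 n)).
have close eps : 0 < eps -> exists n, 1 - eps < cabs (w n) /\ cabs (w n - zeta) < eps.
  move=> eps0; have [K] := ltr_add_invr eps0; rewrite add0r => K_lt.
  have [n Kn n_close] := zeta_cl _ eps0 K; exists n; split=> //.
  apply: le_lt_trans (w_gt n); rewrite lerD2l lerN2; apply: le_trans (ltW K_lt).
  by rewrite lef_pV2 ?posrE ?ltr0Sn // ler_nat ltnS.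
exists zeta; split=> [|eps /close[n [_ n_close]]]; last by exists (w n).
apply/eqP; rewrite eq_le; apply/andP; split; apply/ler_addgt0Pr => eps eps0.
  have [n [_ n_close]] := close eps eps0.
  apply: le_trans (cabs_le_addr_subr _ (w n)) _.
  by rewrite -[cabs (zeta - _)]cabsN opprB lerD // ltW.
have [n [w_gt' n_close]] := close (eps / 2) (divr_gt0 eps0 (ltr0Sn _ 1)).
have := cabs_le_addr_subr (w n) zeta; lra.
Qed.
End BoundedAway.

Section Admissible.
Variables (R : realType) (E : set R[i]) (q : R[i] -> R[i]).
Hypothesis E_disc : E `<=` Udisc (R := R).
Hypothesis q_adm : admissible_q E q.

Lemma admissible_q_bound z : E z -> 0 < cabs (q z) <= 1.
Proof.
move: q_adm; rewrite /admissible_q; case: asboolP => [_ [_ q01 _ _] | _ q1] zE.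
  by have /andP[-> /ltW ->] := q01 z (E_disc zE).
by rewrite q1 ?cabs1 ?ltr01 ?lexx //; exact: E_disc zE.
Qed.

Lemma admissible_q_small_near_circle eps : 0 < eps ->
  exists2 d, 0 < d <= 1 & forall z, E z -> 1 - d < cabs z -> cabs (q z) <= eps.
Proof.
move: q_adm; rewrite /admissible_q; case: asboolP => [_ [_ _ q_lim _] | E_far _] eps0.
  have [d [d0 q_d]] := q_lim eps eps0; exists (Num.min d 1).
    by rewrite lt_min d0 ltr01 ge_min lexx orbT.
  move=> z zE zd; apply/ltW/q_d => //; apply: le_lt_trans zd.
  by rewrite lerD2l lerN2 ge_min lexx.
have [d d01 E_in] := disc_bounded_away E_disc E_far.
by exists d => // z zE; rewrite ltNge E_in.
Qed.
End Admissible.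

Theorem proposition3p7 (R : realType) (E : set R[i]) (q : R[i] -> R[i]) :
  E `<=` @Udisc R ->
  infinite_set E ->
  circle_null (nt_limit_points E) ->
  admissible_q E q ->
  ((fun n : nat => Vn q E n `^ (n%:R)^-1) @ \oo --> 0) /\
  ((fun n : nat => Mn q E n) @ \oo --> 0).
Proof.
move=> E_disc E_inf _ q_adm.
have q_bound := admissible_q_bound E_disc q_adm.
have q_small := admissible_q_small_near_circle E_disc q_adm.
split; [exact: Vn_root_cvg0 q_bound E_inf q_small | exact: Mn_cvg0 q_bound E_inf q_small].
Qed.
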